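(* Let $K\subset\mathbb{R}$ be a compact set with $\mathrm{conv}(K)=[a,b]$, and suppose there exists $\varepsilon>0$ such that $[a,a+\varepsilon]\subset K$ or $[b-\varepsilon,b]\subset K$. Then there exists an index $\ell\in\mathbb{N}$, depending only on $\varepsilon$ and $b-a$, such that \[M_o^{\ell}K=M_o^{\ell+k}K\quad\text{for every }k\in\mathbb{N}.\] Moreover, $\ell$ increases with $b-a$ and decreases as $\varepsilon$ increases.
   Context: For $K\subset\mathbb{R}$, the central Minkowski symmetrization is $M_oK=\frac{K-K}{2}=\{\frac{x-y}{2}:x,y\in K\}$, and $M_o^\ell$ denotes $M_o$ applied $\ell$ times. $\mathrm{conv}$ denotes convex hull. *)

From HB Require Import structures.
From mathcomp Require Import all_boot all_order all_algebra.
From mathcomp Require Import all_classical all_reals all_analysis.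
Set Implicit Arguments. Unset Strict Implicit. Unset Printing Implicit Defensive.
Import Order.TTheory GRing.Theory Num.Theory.
Local Open Scope classical_set_scope.
Local Open Scope ring_scope.

Definition is_convex (R : realType) (C : set R) : Prop :=
  forall x y t, C x -> C y -> 0 <= t -> t <= 1 -> C (t * x + (1 - t) * y).

Definition convex_hull (R : realType) (K : set R) : set R :=
  \bigcap_(C in [set C | is_convex C /\ K `<=` C]) C.

Definition Mo (R : realType) (K : set R) : set R :=
  [set z | exists x y, K x /\ K y /\ z = (x - y) / 2].

Definition Mo_iter (R : realType) (l : nat) (K : set R) : set R := iter l (@Mo R) K.

From HB Require Import structures.
From mathcomp Require Import all_boot all_order all_algebra.
From mathcomp Require Import all_classical all_reals all_analysis.
From mathcomp Require Import ring lra zify.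
Import Order.TTheory GRing.Theory Num.Theory numFieldNormedType.Exports.
Local Open Scope classical_set_scope.
Local Open Scope ring_scope.

(* Every [M_o]-image of a subset of [[a, b]] lies in [[-w/2, w/2]], [w = b - a],
   and [M_o] fixes every symmetric interval, so it suffices that some iterate
   of [K] fills [[-w/2, w/2]].  Both endpoints of [conv K] lie in the closed
   set [K]; up to the reflection [x |-> -x], which [M_o] forgets, assume
   [[a, a + eps] <= K].  Then [M_o K] contains the [eps/4]-neighbourhoods of
   [-c], [0] and [c], where [c = w/2 - eps/4].  Each further application of
   [M_o] halves the step of a dyadic grid from [-c] to [c], and once the step
   [c / 2^n] is at most [eps/4] the neighbourhoods of the grid points cover
   [[-c - eps/4, c + eps/4] = [-w/2, w/2]]; [n = floor (2w/eps)] suffices. *)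

Section ConvexHull.
Set Implicit Arguments.
Unset Strict Implicit.
Variable R : realType.
Implicit Types (K C : set R) (a b p : R).

Lemma sub_convex_hull K : K `<=` convex_hull K.
Proof. by move=> x Kx C [_ KC]; apply: KC. Qed.

Lemma convex_hull_min K C : is_convex C -> K `<=` C -> convex_hull K `<=` C.
Proof. by move=> cC KC x; apply; split. Qed.

Lemma closed_gap K p : closed K -> ~ K p ->
  exists2 e : R, 0 < e & forall x, K x -> e <= `|x - p|.
Proof.
rewrite -openC => oKC nKp.
have /nbhs_ballP[e e0 eKC] : nbhs p (~` K) by apply: oKC.
exists e => // x Kx; rewrite leNgt; apply/negP => xpe.
by apply: (eKC x); rewrite // -ball_normE /= distrC.
Qed.

Lemma closed_convex_hull_ub K b : closed K -> (forall x, K x -> x <= b) ->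
  convex_hull K b -> K b.
Proof.
move=> clK Kb hb; apply: contrapT => nKb.
have [e e0 Ke] := closed_gap clK nKb.
have cC : is_convex [set x | x <= b - e] by move=> x y t /= *; nra.
suff : b <= b - e by lra.
apply: (convex_hull_min cC _ hb) => x Kx /=.
by move: (Ke x Kx); rewrite ler0_norm ?subr_le0 ?Kb //; lra.
Qed.

Lemma closed_convex_hull_lb K b : closed K -> (forall x, K x -> b <= x) ->
  convex_hull K b -> K b.
Proof.
move=> clK Kb hb; apply: contrapT => nKb.
have [e e0 Ke] := closed_gap clK nKb.
have cC : is_convex [set x | b + e <= x] by move=> x y t /= *; nra.
suff : b + e <= b by lra.
apply: (convex_hull_min cC _ hb) => x Kx /=.
by move: (Ke x Kx); rewrite ger0_norm ?subr_ge0 ?Kb //; lra.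
Qed.

Lemma closed_convex_hull_itv_endpoints K a b : closed K ->
  convex_hull K = `[a, b]%classic -> a <= b -> K a /\ K b.
Proof.
move=> clK hK ab.
have Kab x : K x -> a <= x <= b by move/sub_convex_hull; rewrite hK /= in_itv.
have hull_ab x : a <= x <= b -> convex_hull K x by rewrite hK /= in_itv.
split; [apply: (closed_convex_hull_lb clK) | apply: (closed_convex_hull_ub clK)];
  by [move=> x /Kab/andP[] | apply: hull_ab; rewrite lexx ab].
Qed.

End ConvexHull.

Section MinkowskiSymmetrization.
Set Implicit Arguments.
Unset Strict Implicit.
Variable R : realType.
Implicit Types (A K S : set R) (a b c eps h rho t z : R).

Lemma MoN A z : Mo A z -> Mo A (- z).
Proof.
by move=> [x [y [Ax [Ay ->]]]]; exists y, x; do 2 split => //; rewrite -mulNr opprB.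
Qed.

Lemma Mo_opp A : Mo [set x | A (- x)] = Mo A.
Proof.
apply/seteqP; split=> _ [x [y [Ax [Ay ->]]]].
  by exists (- y), (- x); do 2 split => //; congr (_ / _); ring.
by exists (- y), (- x); rewrite /= !opprK; do 2 split => //; congr (_ / _); ring.
Qed.

Lemma Mo_iter_opp A n : Mo_iter n.+1 [set x | A (- x)] = Mo_iter n.+1 A.
Proof. by rewrite /Mo_iter !iterSr Mo_opp. Qed.

Lemma Mo_sub_ball S m h : (forall x, S x -> `|x - m| <= h) ->
  Mo S `<=` [set z | `|z| <= h].
Proof.
move=> hS _ [x [y [Sx [Sy ->]]]] /=.
move: (hS x Sx) (hS y Sy); rewrite !ler_norml => /andP[? ?] /andP[? ?].
by apply/andP; split; lra.
Qed.

Lemma Mo_ball h : 0 <= h -> Mo [set z | `|z| <= h] = [set z | `|z| <= h].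
Proof.
move=> h0; apply/seteqP; split.
  by apply: (Mo_sub_ball (m := 0)) => x; rewrite subr0.
move=> z /= hz; exists z, (- z); rewrite /= normrN; do 2 split => //.
by rewrite opprK; field.
Qed.

Lemma Mo_iter_ball h n : 0 <= h ->
  Mo_iter n [set z | `|z| <= h] = [set z | `|z| <= h].
Proof.
move=> h0; elim: n => [//|n IH].
by rewrite /Mo_iter iterS -/(Mo_iter _ _) IH Mo_ball.
Qed.

Lemma Mo_iter_sub_ball K a b n : (forall x, K x -> a <= x <= b) ->
  Mo_iter n.+1 K `<=` [set z | `|z| <= (b - a) / 2].
Proof.
move=> Kab; elim: n => [|n IH].
- apply: (Mo_sub_ball (m := (a + b) / 2)) => x /Kab/andP[? ?].
  by rewrite ler_norml; apply/andP; split; lra.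
- by apply: (Mo_sub_ball (m := 0)) => x /IH; rewrite subr0.
Qed.

Lemma Mo_itv K a eps t : `[a, a + eps] `<=` K -> `|t| <= eps / 2 -> Mo K t.
Proof.
rewrite ler_norml => Keps /andP[? ?].
exists (a + eps / 2 + t), (a + eps / 2 - t).
by do 2 (split; first by apply: Keps; rewrite /= in_itv /=; apply/andP; split; lra); field.
Qed.

Lemma Mo_itv_endpoint K a b eps t : `[a, a + eps] `<=` K -> K b -> `|t| <= eps / 4 ->
  Mo K ((b - a) / 2 - eps / 4 + t).
Proof.
rewrite ler_norml => Keps Kb /andP[? ?].
exists b, (a + eps / 2 - 2 * t); do 2 split => //; last by field.
apply: Keps; rewrite /= in_itv /=; apply/andP; split; lra.
Qed.

(* [(x - y) / 2] is the midpoint of [x] and [-y]: a grid point of level [n+1]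
   is the midpoint of a grid point of level [n] and [c + t] or [-c + t]. *)
Lemma Mo_iter_dyadic_grid A c rho :
    (forall t, `|t| <= rho -> A (- c + t) /\ A t /\ A (c + t)) ->
  forall n (j : nat) t, (j <= 2 ^ n.+1)%N -> `|t| <= rho ->
    Mo_iter n A (- c + c * j%:R / 2 ^+ n + t).
Proof.
move=> hA; elim=> [|n IH] j t hj ht.
  rewrite expr0 divr1; have [Act [At Aact]] := hA t ht.
  case: j hj => [|[|[|j]]] // _.
  - by rewrite mulr0 addr0.
  - by rewrite mulr1 addNr add0r.
  - by rewrite (_ : - c + c * 2%:R + t = c + t) //; ring.
have p0 : (2 : R) ^+ n != 0 by rewrite expf_neq0.
have htN : `|- t| <= rho by rewrite normrN.
rewrite /Mo_iter iterS -/(Mo_iter _ _).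
have [hjn|hjn] := leqP (2 ^ n.+1) j.
- exists (- c + c * (j - 2 ^ n.+1)%:R / 2 ^+ n + t), (- c + c * 0%:R / 2 ^+ n - t).
  do 2 (split; first by apply: IH => //; rewrite expnS in hj *; lia).
  by rewrite natrB // natrX exprS; field.
- exists (- c + c * 0%:R / 2 ^+ n + t), (- c + c * (2 ^ n.+1 - j)%:R / 2 ^+ n - t).
  do 2 (split; first by apply: IH => //; lia).
  by rewrite natrB ?(ltnW hjn) // natrX exprS; field.
Qed.

Lemma dyadic_grid_cover c rho n z : 0 < c -> 0 < rho -> c <= rho * 2 ^+ n ->
    `|z| <= c + rho ->
  exists (j : nat) t, [/\ (j <= 2 ^ n.+1)%N, `|t| <= rho &
    z = - c + c * j%:R / 2 ^+ n + t].
Proof.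
move=> c0 r0 hn; rewrite ler_norml => /andP[z1 z2].
have p0 : (0 : R) < 2 ^+ n by rewrite exprn_gt0.
set q := c / 2 ^+ n.
have q0 : 0 < q by rewrite divr_gt0.
have qr : q <= rho by rewrite ler_pdivrMr.
have gridE (j : nat) : c * j%:R / 2 ^+ n = q * j%:R by rewrite mulrAC.
have [zc_le0|zc_gt0] := lerP (z + c) 0.
  exists 0%N, (z + c); split => //; last by rewrite gridE; ring.
  by rewrite ler_norml; apply/andP; split; lra.
have [zc_ge|zc_lt] := lerP (2 * c) (z + c).
  exists (2 ^ n.+1)%N, (z - c); split => //.
    by rewrite ler_norml; apply/andP; split; lra.
  by rewrite natrX exprS; field; rewrite gt_eqF.
set v := (z + c) / q.
have v0 : 0 <= v by rewrite divr_ge0 // ltW.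
have zcE : z + c = q * v by rewrite mulrC mulfVK // gt_eqF.
have /andP[jv vj] := truncn_itv v0; set j := Num.truncn v in jv vj.
exists j, (q * (v - j%:R)); split.
- suff : j%:R < (2 ^ n.+1)%:R :> R by rewrite ltr_nat => /ltnW.
  rewrite natrX exprS; apply: (le_lt_trans jv).
  have cE : c = q * 2 ^+ n by rewrite mulfVK ?gt_eqF.
  by rewrite ltr_pdivrMr // -mulrA [_ * q]mulrC -cE; lra.
- have vj1 : v - j%:R <= 1 by move: vj; rewrite -addn1 natrD; lra.
  rewrite ger0_norm; last by rewrite mulr_ge0 ?subr_ge0 // ltW.
  exact: le_trans (ler_piMr (ltW q0) vj1) qr.
- by rewrite gridE; lra.
Qed.

Lemma ltr_exp2_truncn (x : R) : x < 2 ^+ Num.truncn x.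
Proof.
have [x0|x0] := ltrP x 0; first by apply: (lt_le_trans x0); rewrite exprn_ge0.
apply: (lt_le_trans (truncnS_gt x)).
by rewrite -natrX ler_nat ltn_expl.
Qed.

Definition stable_index eps w : nat := (Num.truncn (2 * w / eps)).+1.

Lemma Mo_iter_stable_index K a b eps : 0 < eps ->
    (forall x, K x -> a <= x <= b) -> K b -> `[a, a + eps] `<=` K ->
  Mo_iter (stable_index eps (b - a)) K = [set z | `|z| <= (b - a) / 2].
Proof.
move=> e0 Kab Kb Keps.
have /Kab/andP[_ hab] : K (a + eps).
  by apply: Keps; rewrite /= in_itv /= lexx; apply/andP; split; lra.
apply/seteqP; split; first exact: Mo_iter_sub_ball.
rewrite /stable_index; set n := Num.truncn _.
have hn : (b - a) / 2 - eps / 4 <= eps / 4 * 2 ^+ n.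
  have := ltr_exp2_truncn (2 * (b - a) / eps).
  by rewrite -/n ltr_pdivrMr // => ?; nra.
have c0 : 0 < (b - a) / 2 - eps / 4 by lra.
have r0 : 0 < eps / 4 by lra.
move=> z hz; have hz' : `|z| <= (b - a) / 2 - eps / 4 + eps / 4.
  by move: hz => /=; lra.
have [j [t [hj ht ->]]] := dyadic_grid_cover c0 r0 hn hz'.
rewrite /Mo_iter iterSr -/(Mo_iter _ _).
apply: (Mo_iter_dyadic_grid (rho := eps / 4)) => // s hs; split; [|split].
- have hsN : `|- s| <= eps / 4 by rewrite normrN.
  by have := MoN (Mo_itv_endpoint Keps Kb hsN); rewrite opprD opprK.
- by apply: (Mo_itv Keps); lra.
- exact: Mo_itv_endpoint.
Qed.

End MinkowskiSymmetrization.

Theorem lemma13 (R : realType) :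
  exists L : R -> R -> nat,
    (* L eps w : the index, a function of eps and the width w = b - a only *)
    (forall eps w1 w2, 0 < eps -> 0 < w1 -> w1 <= w2 -> (L eps w1 <= L eps w2)%N) /\
    (forall eps1 eps2 w, 0 < eps1 -> eps1 <= eps2 -> 0 < w -> (L eps2 w <= L eps1 w)%N) /\
    (forall (K : set R) (a b eps : R),
        compact K ->
        convex_hull K = `[a, b]%classic ->
        0 < eps ->
        (`[a, a + eps]%classic `<=` K \/ `[b - eps, b]%classic `<=` K) ->
        forall k : nat, Mo_iter (L eps (b - a)) K = Mo_iter (L eps (b - a) + k) K).
Proof.
exists (@stable_index R); split; [|split].
- move=> eps w1 w2 e0 w0 le; rewrite ltnS; apply: le_truncn.
  by apply: ler_wpM2r; [rewrite invr_ge0 ltW | lra].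
- move=> e1 e2 w e0 le w0; rewrite ltnS; apply: le_truncn.
  by apply: ler_wpM2l; [lra | rewrite lef_pV2 ?posrE //; lra].
move=> K a b eps cK hK e0 hI k.
have clK := compact_closed (@Rhausdorff R) cK.
have Kab x : K x -> a <= x <= b by move/sub_convex_hull; rewrite hK /= in_itv.
have ab : a <= b.
  have [x Kx] : exists x, K x.
    case: hI => Keps; [exists a | exists b];
      by apply: Keps; rewrite /= in_itv /= lexx; lra.
  by have /andP[? ?] := Kab x Kx; lra.
have [Ka Kb] := closed_convex_hull_itv_endpoints clK hK ab.
have full : Mo_iter (stable_index eps (b - a)) K = [set z | `|z| <= (b - a) / 2].
  case: hI => Keps; first exact: Mo_iter_stable_index.
  rewrite -Mo_iter_opp (_ : b - a = - a - - b); last ring.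
  apply: Mo_iter_stable_index; rewrite /= ?opprK // => x.
    by move=> /Kab/andP[? ?]; apply/andP; split; lra.
  rewrite /= in_itv /= => /andP[? ?]; apply: Keps.
  by rewrite /= in_itv /=; apply/andP; split; lra.
have w0 : 0 <= (b - a) / 2 by lra.
by rewrite addnC /Mo_iter iterD -/(Mo_iter _ K) full -/(Mo_iter k _) Mo_iter_ball.
Qed.
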